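(* Let $M>0$ and $\alpha>0$. There exist $\varepsilon_0>0$ and $l\in\mathbb N$ such that the following holds. Let $\varepsilon<\varepsilon_0$, $S\in\mathcal A(M,\varepsilon,\alpha)$, and let $T=\phi(j_1,\dots,j_m)(L)$ be an $m$-block of $C_S$. Let $F:T\to L$ be a $C^1$ map with nonvanishing derivative and $\mathcal N(F)<1/2$, such that $F$ maps each connected component of $T\setminus C_S$ onto a connected component of $L\setminus C_S$, and suppose there is a gap $\phi(j_1,\dots,j_m,i_1,\dots,i_p)(J_i)\subset T$ of level $m+p$ with $F\big(\phi(j_1,\dots,j_m,i_1,\dots,i_p)(J_i)\big)=J_j$ for some $1\le i,j\le k-1$. Then $p\le l$.
   Context: Setting: $k\ge2$; $I_1,\dots,I_k$ pairwise disjoint compact intervals in $[0,1)$ ordered left to right; $L\subset[0,1)$ compact interval containing $I=I_1\cup\dots\cup I_k$. $\mathcal S^{r}(I_1,\dots,I_k,L)$: $C^r$ maps $S:I\to L$ with $S(I_j)=L$ for all $j$ and $|S'|>1$; $C_S=\{x\in I:S^n(x)\in I\ \forall n\ge1\}$. For a $C^1$ map $F$ with nonvanishing derivative on an interval $T$, $\mathcal N(F)=\sup_{x,y\in T}\log\frac{|F'(x)|}{|F'(y)|}$; for $S$, $\mathcal N(S)=\max_j\sup_{x,y\in I_j}\log\frac{|S'(x)|}{|S'(y)|}$. $\mathcal A(M,\varepsilon,\alpha)$ is the set of $S\in\mathcal S^{1+\alpha}(I_1,\dots,I_k,L)$ with $\mathcal N(S)<\varepsilon$ and $|\log\frac{|S'(x)|}{|S'(y)|}|\le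 M|x-y|^\alpha$ for $x,y$ in a common $I_j$. Inverse branches $\phi_i=(S|_{I_i})^{-1}$, $\phi(i_1,\dots,i_m)=\phi_{i_1}\circ\dots\circ\phi_{i_m}$; $\phi(i_1,\dots,i_m)(L)$ is an $m$-block. $J_i$ ($1\le i\le k-1$) is the open interval between $I_i$ and $I_{i+1}$; $\phi(i_1,\dots,i_r)(J_i)$ is a gap of level $r$. *)

From Stdlib Require Import Reals List.
Open Scope R_scope.

(* Derivative of f at x, computed within the set D (one-sided at endpoints). *)
Definition deriv_within (D : R -> Prop) (f : R -> R) (x l : R) : Prop :=
  forall eps, 0 < eps -> exists delta, 0 < delta /\
    forall y, D y -> y <> x -> Rabs (y - x) < delta ->
      Rabs ((f y - f x) / (y - x) - l) < eps.

Definition cont_within (D : R -> Prop) (f : R -> R) (x : R) : Prop :=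
  forall eps, 0 < eps -> exists delta, 0 < delta /\
    forall y, D y -> Rabs (y - x) < delta -> Rabs (f y - f x) < eps.

Definition C1_on (D : R -> Prop) (f df : R -> R) : Prop :=
  (forall x, D x -> deriv_within D f x (df x)) /\
  (forall x, D x -> cont_within D df x).

Definition Icc (u v : R) : R -> Prop := fun x => u <= x <= v.

(* the j-th interval I_j = [a j, b j]; indices 1..k *)
Definition Ij (a b : nat -> R) (j : nat) : R -> Prop := Icc (a j) (b j).

Definition Iunion (k : nat) (a b : nat -> R) : R -> Prop :=
  fun x => exists j, (1 <= j <= k)%nat /\ Ij a b j x.

Definition Jgap (a b : nat -> R) (i : nat) : R -> Prop :=
  fun x => b i < x < a (S i).

Definition setting (k : nat) (a b : nat -> R) (c d : R) : Prop :=
  (2 <= k)%nat /\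
  (forall j, (1 <= j <= k)%nat -> a j < b j) /\
  (forall j, (1 <= j < k)%nat -> b j < a (S j)) /\
  0 <= a 1%nat /\ b k < 1 /\
  0 <= c /\ c <= d /\ d < 1 /\
  (forall j, (1 <= j <= k)%nat -> c <= a j /\ b j <= d).

Definition maps_onto (f : R -> R) (A B : R -> Prop) : Prop :=
  forall y, B y <-> exists x, A x /\ f x = y.

(* S : I -> L, S is C^{1+alpha} on each I_j, S(I_j) = L, |S'| > 1;
   dS is the derivative of S. *)
Definition in_class_S (k : nat) (a b : nat -> R) (c d alpha : R)
    (S dS : R -> R) : Prop :=
  (forall j, (1 <= j <= k)%nat ->
     C1_on (Ij a b j) S dS /\
     (exists C, forall x y, Ij a b j x -> Ij a b j y -> x <> y ->
        Rabs (dS x - dS y) <= C * Rpower (Rabs (x - y)) alpha) /\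
     maps_onto S (Ij a b j) (Icc c d) /\
     (forall x, Ij a b j x -> 1 < Rabs (dS x))).

(* N(S) < eps, i.e. the supremum of the distortion is < eps *)
Definition distortion_lt (k : nat) (a b : nat -> R) (dS : R -> R) (eps : R) : Prop :=
  exists s, s < eps /\
    forall j x y, (1 <= j <= k)%nat -> Ij a b j x -> Ij a b j y ->
      ln (Rabs (dS x) / Rabs (dS y)) <= s.

Definition in_class_A (k : nat) (a b : nat -> R) (c d M eps alpha : R)
    (S dS : R -> R) : Prop :=
  in_class_S k a b c d alpha S dS /\
  distortion_lt k a b dS eps /\
  (forall j x y, (1 <= j <= k)%nat -> Ij a b j x -> Ij a b j y -> x <> y ->
     Rabs (ln (Rabs (dS x) / Rabs (dS y))) <= M * Rpower (Rabs (x - y)) alpha).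

Definition CS (k : nat) (a b : nat -> R) (S : R -> R) : R -> Prop :=
  fun x => Iunion k a b x /\
    forall n, (1 <= n)%nat -> Iunion k a b (Nat.iter n S x).

(* phi_i(A) for A ⊆ L: image of A under the inverse branch (S|_{I_i})^{-1},
   i.e. { x ∈ I_i : S x ∈ A } *)
Definition branch_img (a b : nat -> R) (S : R -> R) (i : nat) (A : R -> Prop)
  : R -> Prop := fun x => Ij a b i x /\ A (S x).

(* phi(i_1,...,i_m)(A) = phi_{i_1} ∘ ... ∘ phi_{i_m} (A) *)
Definition word_img (a b : nat -> R) (S : R -> R) (w : list nat) (A : R -> Prop)
  : R -> Prop := fold_right (branch_img a b S) A w.

Definition valid_word (k : nat) (w : list nat) : Prop :=
  Forall (fun i => (1 <= i <= k)%nat) w.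

Definition convex (A : R -> Prop) : Prop :=
  forall x y z, A x -> A z -> x <= y <= z -> A y.

Definition conn_comp (X C : R -> Prop) : Prop :=
  (exists x, C x) /\ convex C /\ (forall x, C x -> X x) /\
  (forall D, convex D -> (forall x, C x -> D x) -> (forall x, D x -> X x) ->
     forall x, D x -> C x).

Definition setminus (X Y : R -> Prop) : R -> Prop := fun x => X x /\ ~ Y x.

Definition subset (X Y : R -> Prop) : Prop := forall x, X x -> Y x.

(** Lengths are compared through the "ratio distortion"
       |u - v| |f x - f y| <= K |f u - f v| |x - y|,
    which follows from the mean value theorem and a bound on ratios of derivatives, and which
    is multiplicative under composition with injective maps.
    - Small distortion forces uniform expansion |S'| >= lam > 1, because every branch maps an
      interval strictly shorter than L onto L (section "Expansion from small distortion").
    - The Hoelder condition bounds the ratio distortion of S^m on m-blocks uniformly in m,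
      since m-blocks shrink geometrically (section "Expanding branches").
    - For u, v in G: relative to T the gap G has size at most e^K lam^-p (distortion of S^m,
      then expansion of S^p inside L), and F preserves relative sizes up to e^{1/2}; hence
      lam^p |F u - F v| <= e^{1/2} e^K |L|.  Choosing F u, F v at the quarter points of J_j
      bounds lam^p, hence p. *)

From Stdlib Require Import Reals Lra Lia List.
From Coquelicot Require Coquelicot.
Open Scope R_scope.

(** ** Calculus for functions differentiable within a convex set *)

(** Projection onto [lo, hi]; it turns a function on [lo, hi] into a function on R. *)
Definition clamp (lo hi t : R) : R := Rmax lo (Rmin hi t).

Lemma clamp_in lo hi t : lo <= hi -> lo <= clamp lo hi t <= hi.
Proof. intros; unfold clamp, Rmax, Rmin; repeat destruct Rle_dec; lra. Qed.

Lemma clamp_id lo hi t : lo <= t <= hi -> clamp lo hi t = t.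
Proof. intros; unfold clamp, Rmax, Rmin; repeat destruct Rle_dec; lra. Qed.

Lemma clamp_lipschitz lo hi t1 t2 : lo <= hi ->
  Rabs (clamp lo hi t1 - clamp lo hi t2) <= Rabs (t1 - t2).
Proof.
  intros; unfold clamp, Rmax, Rmin; repeat destruct Rle_dec;
    repeat (unfold Rabs; destruct Rcase_abs); lra.
Qed.

Lemma deriv_within_cont D f x l : deriv_within D f x l -> cont_within D f x.
Proof.
  intros H eps Heps.
  destruct (H 1 Rlt_0_1) as [delta [Hdelta Hquot]].
  assert (Hl : 0 < Rabs l + 1) by (pose proof (Rabs_pos l); lra).
  exists (Rmin delta (eps / (Rabs l + 1))). split.
  { apply Rmin_pos; [lra | apply Rdiv_lt_0_compat; lra]. }
  intros y Dy Hy.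
  destruct (Req_dec y x) as [->|Hne]; [rewrite Rminus_diag, Rabs_R0; lra|].
  specialize (Hquot y Dy Hne (Rlt_le_trans _ _ _ Hy (Rmin_l _ _))).
  assert (Hy2 := Rlt_le_trans _ _ _ Hy (Rmin_r _ _)).
  assert (Hq : Rabs ((f y - f x) / (y - x)) <= Rabs l + 1)
    by (pose proof (Rabs_triang_inv ((f y - f x) / (y - x)) l); lra).
  replace (f y - f x) with ((f y - f x) / (y - x) * (y - x)) by (field; lra).
  rewrite Rabs_mult.
  apply Rle_lt_trans with ((Rabs l + 1) * Rabs (y - x)).
  { apply Rmult_le_compat_r; [apply Rabs_pos | exact Hq]. }
  apply Rlt_le_trans with ((Rabs l + 1) * (eps / (Rabs l + 1))).
  { apply Rmult_lt_compat_l; lra. }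
  right; field; lra.
Qed.

(** A function continuous within D, composed with the projection onto [lo, hi] ⊆ D, is
    continuous on the whole line; this is how the classical MVT/IVT are brought to bear. *)
Lemma clamp_continuity D f lo hi t0 : lo <= hi -> (forall z, lo <= z <= hi -> D z) ->
  (forall z, lo <= z <= hi -> cont_within D f z) ->
  continuity_pt (fun t => f (clamp lo hi t)) t0.
Proof.
  intros Hle HD Hc.
  unfold continuity_pt, continue_in, limit1_in, limit_in; simpl; unfold R_dist.
  intros eps Heps.
  destruct (Hc _ (clamp_in lo hi t0 Hle) eps Heps) as [delta [Hdelta H]].
  exists delta; split; [exact Hdelta|].
  intros t [_ Ht]. apply H; [apply HD, clamp_in; exact Hle|].
  eapply Rle_lt_trans; [apply clamp_lipschitz; exact Hle | exact Ht].
Qed.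

Lemma mvt_within (D : R -> Prop) f df x y : x < y -> (forall z, x <= z <= y -> D z) ->
  (forall z, D z -> deriv_within D f z (df z)) ->
  exists z, x <= z <= y /\ f y - f x = df z * (y - x).
Proof.
  intros Hxy HD Hd.
  set (g := fun t => f (clamp x y t)).
  destruct (Coquelicot.Derive.MVT_gen g x y df) as [z [Hz Heq]].
  - rewrite Rmin_left, Rmax_right by lra. intros z Hz.
    apply (proj2 (Coquelicot.Derive.is_derive_Reals _ _ _)).
    intros eps Heps.
    destruct (Hd z (HD z ltac:(lra)) eps Heps) as [delta [Hdelta Hq]].
    set (r := Rmin delta (Rmin (z - x) (y - z))).
    assert (Hr : 0 < r) by (repeat apply Rmin_pos; lra).
    assert (Hr1 : r <= delta) by apply Rmin_l.
    assert (Hr2 : r <= z - x) by (eapply Rle_trans; [apply Rmin_r | apply Rmin_l]).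
    assert (Hr3 : r <= y - z) by (eapply Rle_trans; [apply Rmin_r | apply Rmin_r]).
    exists (mkposreal _ Hr). simpl. intros h Hh Hha.
    assert (Hzh : x <= z + h <= y) by (revert Hha; unfold Rabs; destruct Rcase_abs; lra).
    unfold g. rewrite !clamp_id by lra.
    specialize (Hq (z + h) (HD _ Hzh) ltac:(lra)).
    replace (z + h - z) with h in Hq by ring. apply Hq. lra.
  - rewrite Rmin_left, Rmax_right by lra. intros z Hz.
    apply clamp_continuity with D; [lra | exact HD |].
    intros w Hw. apply deriv_within_cont with (df w), Hd, HD, Hw.
  - rewrite Rmin_left, Rmax_right in Hz by lra.
    exists z; split; [exact Hz|]. unfold g in Heq. rewrite !clamp_id in Heq by lra. exact Heq.
Qed.

Lemma ivt_within (D : R -> Prop) f x y : x <= y -> (forall z, x <= z <= y -> D z) ->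
  (forall z, x <= z <= y -> cont_within D f z) -> f x * f y <= 0 ->
  exists z, x <= z <= y /\ f z = 0.
Proof.
  intros Hxy HD Hc Hs.
  destruct (IVT_cor (fun t => f (clamp x y t)) x y) as [z [Hz Hfz]].
  - intro t; apply clamp_continuity with D; assumption.
  - exact Hxy.
  - rewrite !clamp_id by lra; exact Hs.
  - exists z; split; [exact Hz|]. rewrite clamp_id in Hfz by lra; exact Hfz.
Qed.

Lemma mvt_within_abs (D : R -> Prop) f df x y : convex D -> D x -> D y ->
  (forall z, D z -> deriv_within D f z (df z)) ->
  exists z, D z /\ Rabs (f y - f x) = Rabs (df z) * Rabs (y - x).
Proof.
  intros Hc Dx Dy Hd.
  destruct (Rtotal_order x y) as [Hlt|[Heq|Hgt]].
  - destruct (mvt_within D f df x y Hlt) as [z [Hz Ez]];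
      [intros z Hz; apply (Hc x z y); auto | exact Hd |].
    exists z. split; [apply (Hc x z y); auto|]. rewrite Ez, Rabs_mult; reflexivity.
  - subst. exists y. split; [exact Dy|]. rewrite !Rminus_diag, Rabs_R0; ring.
  - destruct (mvt_within D f df y x Hgt) as [z [Hz Ez]];
      [intros z Hz; apply (Hc y z x); auto | exact Hd |].
    exists z. split; [apply (Hc y z x); auto|].
    rewrite (Rabs_minus_sym (f y)), (Rabs_minus_sym y), Ez, Rabs_mult; reflexivity.
Qed.

Lemma nonvanishing_constant_sign (D : R -> Prop) g : convex D ->
  (forall z, D z -> cont_within D g z) -> (forall z, D z -> g z <> 0) ->
  forall x y, D x -> D y -> 0 < g x * g y.
Proof.
  intros Hc Hcont Hnz.
  assert (Hordered : forall x y, D x -> D y -> x <= y -> 0 < g x * g y).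
  { intros x y Dx Dy Hxy.
    destruct (Rlt_or_le 0 (g x * g y)) as [Hpos|Hneg]; [exact Hpos|].
    destruct (ivt_within D g x y Hxy) as [z [Hz Hgz]].
    - intros z Hz; apply (Hc x z y); auto.
    - intros z Hz; apply Hcont, (Hc x z y); auto.
    - exact Hneg.
    - exfalso. apply (Hnz z); [apply (Hc x z y); auto | exact Hgz]. }
  intros x y Dx Dy.
  destruct (Rle_dec x y); [apply Hordered; auto|].
  rewrite Rmult_comm. apply Hordered; auto; lra.
Qed.

Lemma Icc_convex u v : convex (Icc u v).
Proof. intros x y z Hx Hz Hy; unfold Icc in *; lra. Qed.

Lemma deriv_within_subset (D D' : R -> Prop) f x l : subset D' D ->
  deriv_within D f x l -> deriv_within D' f x l.
Proof.
  intros Hsub H eps Heps. destruct (H eps Heps) as [delta [Hdelta Hq]].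
  exists delta. split; [exact Hdelta|]. intros y Dy. apply Hq, Hsub, Dy.
Qed.

Lemma exp_monotone x y : x <= y -> exp x <= exp y.
Proof. intros [H|<-]; [left; apply exp_increasing, H | lra]. Qed.

Lemma le_of_ln_ratio p q s : 0 < p -> 0 < q -> ln (p / q) <= s -> p <= exp s * q.
Proof.
  intros Hp Hq Hs.
  assert (Hr : p / q <= exp s).
  { rewrite <- (exp_ln (p / q)) by (apply Rdiv_lt_0_compat; assumption).
    apply exp_monotone, Hs. }
  apply (Rmult_le_compat_r q) in Hr; [|lra].
  replace (p / q * q) with p in Hr by (field; lra). exact Hr.
Qed.

(** ** Ratio distortion *)

Definition ratio_distortion (D : R -> Prop) (f : R -> R) (K : R) : Prop :=
  forall u v x y, D u -> D v -> D x -> D y ->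
    Rabs (u - v) * Rabs (f x - f y) <= K * Rabs (f u - f v) * Rabs (x - y).

Lemma ratio_distortion_of_deriv (D : R -> Prop) f df K : convex D ->
  (forall z, D z -> deriv_within D f z (df z)) ->
  (forall z w, D z -> D w -> Rabs (df z) <= K * Rabs (df w)) ->
  ratio_distortion D f K.
Proof.
  intros Hc Hd Hratio u v x y Du Dv Dx Dy.
  destruct (mvt_within_abs D f df y x Hc Dy Dx Hd) as [z [Dz Ez]].
  destruct (mvt_within_abs D f df v u Hc Dv Du Hd) as [w [Dw Ew]].
  rewrite Ez, Ew.
  pose proof (Hratio z w Dz Dw).
  pose proof (Rabs_pos (u - v)); pose proof (Rabs_pos (x - y)).
  replace (Rabs (u - v) * (Rabs (df z) * Rabs (x - y)))
    with (Rabs (df z) * (Rabs (u - v) * Rabs (x - y))) by ring.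
  replace (K * (Rabs (df w) * Rabs (u - v)) * Rabs (x - y))
    with (K * Rabs (df w) * (Rabs (u - v) * Rabs (x - y))) by ring.
  apply Rmult_le_compat_r; [apply Rmult_le_pos|]; assumption.
Qed.

Lemma ratio_distortion_weaken D f K K' : K <= K' ->
  ratio_distortion D f K -> ratio_distortion D f K'.
Proof.
  intros HK H u v x y Du Dv Dx Dy.
  eapply Rle_trans; [apply H; assumption|].
  pose proof (Rabs_pos (f u - f v)); pose proof (Rabs_pos (x - y)).
  apply Rmult_le_compat_r; [assumption|]. apply Rmult_le_compat_r; assumption.
Qed.

Lemma ratio_distortion_comp (D E : R -> Prop) f g K1 K2 :
  (forall x, D x -> E (f x)) -> (forall x y, D x -> D y -> f x = f y -> x = y) ->
  ratio_distortion D f K1 -> ratio_distortion E g K2 ->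
  ratio_distortion D (fun x => g (f x)) (K1 * K2).
Proof.
  intros Hmaps Hinj Hf Hg u v x y Du Dv Dx Dy.
  destruct (Req_dec x y) as [<-|Hxy].
  { rewrite !Rminus_diag, Rabs_R0. lra. }
  destruct (Req_dec u v) as [<-|Huv].
  { rewrite !Rminus_diag, Rabs_R0. lra. }
  assert (HA : 0 < Rabs (f x - f y)).
  { apply Rabs_pos_lt. intro E0. apply Hxy, Hinj; [assumption | assumption | lra]. }
  assert (HB : 0 < Rabs (f u - f v)).
  { apply Rabs_pos_lt. intro E0. apply Huv, Hinj; [assumption | assumption | lra]. }
  pose proof (Hf u v x y Du Dv Dx Dy) as Hfuv.
  pose proof (Hg (f u) (f v) (f x) (f y) (Hmaps u Du) (Hmaps v Dv) (Hmaps x Dx) (Hmaps y Dy))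
    as Hgfuv.
  apply (Rmult_le_reg_r (Rabs (f x - f y) * Rabs (f u - f v))); [apply Rmult_lt_0_compat; lra|].
  replace (Rabs (u - v) * Rabs (g (f x) - g (f y)) * (Rabs (f x - f y) * Rabs (f u - f v)))
    with ((Rabs (u - v) * Rabs (f x - f y)) * (Rabs (f u - f v) * Rabs (g (f x) - g (f y))))
    by ring.
  replace (K1 * K2 * Rabs (g (f u) - g (f v)) * Rabs (x - y) * (Rabs (f x - f y) * Rabs (f u - f v)))
    with ((K1 * Rabs (f u - f v) * Rabs (x - y)) * (K2 * Rabs (g (f u) - g (f v)) * Rabs (f x - f y)))
    by ring.
  apply Rmult_le_compat; try (apply Rmult_le_pos; apply Rabs_pos); assumption.
Qed.

(** ** Blocks of the Cantor set *)

Lemma valid_cons k j w : valid_word k (j :: w) -> (1 <= j <= k)%nat /\ valid_word k w.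
Proof. intro H. inversion H; subst; auto. Qed.

Lemma word_iter a b S w A x : word_img a b S w A x -> A (Nat.iter (length w) S x).
Proof.
  revert x; induction w as [|j w IH]; intros x H; [exact H|].
  destruct H as [_ H]. simpl length. rewrite Nat.iter_succ_r. apply IH, H.
Qed.

Lemma word_mono a b S w (A B : R -> Prop) x : subset A B ->
  word_img a b S w A x -> word_img a b S w B x.
Proof.
  revert x; induction w as [|j w IH]; intros x HAB H; simpl in *; [apply HAB, H|].
  destruct H as [H1 H2]. split; [exact H1 | apply IH; assumption].
Qed.

Lemma word_app a b S w1 w2 A x :
  word_img a b S (w1 ++ w2) A x <-> word_img a b S w1 (word_img a b S w2 A) x.
Proof. unfold word_img. rewrite fold_right_app. reflexivity. Qed.

(** ** Expanding branches *)

Section ExpandingBranches.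

Variables (k : nat) (a b : nat -> R) (c d lam : R) (S dS : R -> R).
Hypothesis lam_gt_1 : 1 < lam.
Hypothesis c_lt_d : c < d.
Hypothesis branch_C1 : forall j, (1 <= j <= k)%nat -> C1_on (Ij a b j) S dS.
Hypothesis branch_onto : forall j, (1 <= j <= k)%nat -> maps_onto S (Ij a b j) (Icc c d).
Hypothesis branch_in_L : forall j, (1 <= j <= k)%nat -> subset (Ij a b j) (Icc c d).
Hypothesis branch_expanding :
  forall j x, (1 <= j <= k)%nat -> Ij a b j x -> lam <= Rabs (dS x).

Lemma branch_expands j x y : (1 <= j <= k)%nat -> Ij a b j x -> Ij a b j y ->
  lam * Rabs (x - y) <= Rabs (S x - S y).
Proof.
  intros Hj Hx Hy.
  destruct (mvt_within_abs (Ij a b j) S dS y x (Icc_convex _ _) Hy Hx (proj1 (branch_C1 j Hj)))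
    as [z [Hz Ez]].
  rewrite Ez. apply Rmult_le_compat_r; [apply Rabs_pos | apply (branch_expanding j z Hj Hz)].
Qed.

Lemma branch_injective j x y : (1 <= j <= k)%nat -> Ij a b j x -> Ij a b j y ->
  S x = S y -> x = y.
Proof.
  intros Hj Hx Hy E. pose proof (branch_expands j x y Hj Hx Hy) as H.
  rewrite E, Rminus_diag, Rabs_R0 in H.
  destruct (Req_dec x y) as [|Hne]; [assumption|].
  pose proof (Rabs_pos_lt (x - y) ltac:(lra)). nra.
Qed.

(** The derivative of a branch never vanishes, so it has constant sign: branches are
    strictly monotone. *)
Lemma branch_monotone j : (1 <= j <= k)%nat ->
  (forall x y, Ij a b j x -> Ij a b j y -> x < y -> S x < S y) \/
  (forall x y, Ij a b j x -> Ij a b j y -> x < y -> S y < S x).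
Proof.
  intros Hj. destruct (branch_C1 j Hj) as [Hd Hcont].
  assert (Hnz : forall z, Ij a b j z -> dS z <> 0).
  { intros z Hz E. pose proof (branch_expanding j z Hj Hz). rewrite E, Rabs_R0 in H. lra. }
  destruct (proj1 (branch_onto j Hj c) ltac:(unfold Icc; lra)) as [x0 [Hx0 _]].
  pose proof (nonvanishing_constant_sign _ dS (Icc_convex _ _) Hcont Hnz x0) as Hsign.
  assert (Hslope : forall x y, Ij a b j x -> Ij a b j y -> x < y ->
            0 < (S y - S x) * dS x0).
  { intros x y Hx Hy Hxy.
    destruct (mvt_within (Ij a b j) S dS x y Hxy) as [z [Hz Ez]];
      [intros z Hz; apply (Icc_convex _ _ x z y); auto | exact Hd |].
    assert (Hz' : Ij a b j z) by (apply (Icc_convex _ _ x z y); auto).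
    pose proof (Hsign z Hx0 Hz'). rewrite Ez. nra. }
  destruct (Rlt_or_le 0 (dS x0)) as [Hpos|Hneg].
  - left. intros x y Hx Hy Hxy. pose proof (Hslope x y Hx Hy Hxy). nra.
  - right. intros x y Hx Hy Hxy. pose proof (Hslope x y Hx Hy Hxy).
    pose proof (Hnz x0 Hx0). nra.
Qed.

Lemma block_in_L w x : valid_word k w -> word_img a b S w (Icc c d) x -> Icc c d x.
Proof.
  destruct w as [|j w]; [intros _ Hx; exact Hx|].
  intros Hv [Hx _]. apply (branch_in_L j (proj1 (valid_cons _ _ _ Hv))), Hx.
Qed.

Lemma block_surj w y : valid_word k w -> Icc c d y ->
  exists x, word_img a b S w (Icc c d) x /\ Nat.iter (length w) S x = y.
Proof.
  revert y; induction w as [|j w IH]; intros y Hv Hy; [exists y; split; auto|].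
  apply valid_cons in Hv as [Hj Hv].
  destruct (IH y Hv Hy) as [x' [Hx' Hiter]].
  destruct (proj1 (branch_onto j Hj x') (block_in_L w x' Hv Hx')) as [x [Hx Hsx]].
  exists x. split.
  - split; [exact Hx | rewrite Hsx; exact Hx'].
  - simpl length. rewrite Nat.iter_succ_r, Hsx. exact Hiter.
Qed.

(** Blocks of convex sets are convex, since the branches are monotone. *)
Lemma block_convex w A : valid_word k w -> convex A -> convex (word_img a b S w A).
Proof.
  induction w as [|j w IH]; intros Hv HA; [exact HA|].
  apply valid_cons in Hv as [Hj Hv]. specialize (IH Hv HA).
  intros x y z [Hx1 Hx2] [Hz1 Hz2] Hy.
  assert (Hy1 : Ij a b j y) by (apply (Icc_convex _ _ x y z); auto).
  split; [exact Hy1|].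
  destruct (Req_dec x y) as [<-|Hxy]; [exact Hx2|].
  destruct (Req_dec y z) as [->|Hyz]; [exact Hz2|].
  destruct (branch_monotone j Hj) as [Hm|Hm].
  - apply (IH (S x) (S y) (S z)); auto. split; left; apply Hm; auto; lra.
  - apply (IH (S z) (S y) (S x)); auto. split; left; apply Hm; auto; lra.
Qed.

Lemma block_expands w A x y : valid_word k w ->
  word_img a b S w A x -> word_img a b S w A y ->
  Rabs (x - y) * lam ^ length w <= Rabs (Nat.iter (length w) S x - Nat.iter (length w) S y).
Proof.
  revert x y; induction w as [|j w IH]; intros x y Hv Hx Hy; [simpl; lra|].
  apply valid_cons in Hv as [Hj Hv]. destruct Hx as [Hx1 Hx2], Hy as [Hy1 Hy2].
  simpl length. rewrite !Nat.iter_succ_r.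
  eapply Rle_trans; [|apply (IH _ _ Hv Hx2 Hy2)].
  pose proof (branch_expands j x y Hj Hx1 Hy1).
  assert (0 <= lam ^ length w) by (apply pow_le; lra).
  simpl pow. rewrite <- Rmult_assoc, (Rmult_comm (Rabs _) lam).
  apply Rmult_le_compat_r; assumption.
Qed.

Lemma block_diameter w x y : valid_word k w ->
  word_img a b S w (Icc c d) x -> word_img a b S w (Icc c d) y ->
  Rabs (x - y) * lam ^ length w <= d - c.
Proof.
  intros Hv Hx Hy. eapply Rle_trans; [apply (block_expands w _ x y Hv Hx Hy)|].
  pose proof (word_iter _ _ _ _ _ _ Hx) as Hx'. pose proof (word_iter _ _ _ _ _ _ Hy) as Hy'.
  unfold Icc in Hx', Hy'. unfold Rabs; destruct Rcase_abs; lra.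
Qed.

Variables (M alpha : R).
Hypothesis alpha_pos : 0 < alpha.
Hypothesis M_nonneg : 0 <= M.
Hypothesis holder : forall j x y, (1 <= j <= k)%nat -> Ij a b j x -> Ij a b j y -> x <> y ->
  Rabs (ln (Rabs (dS x) / Rabs (dS y))) <= M * Rpower (Rabs (x - y)) alpha.

(** q = lam^-alpha: the Hoelder modulus M diam^alpha of n-blocks decays like q^n. *)
Definition holder_ratio : R := Rpower (/ lam) alpha.

(** Bound on the log of the ratio distortion of S^n on n-blocks, uniform in n. *)
Definition block_distortion_bound : R :=
  M * Rpower (d - c) alpha * holder_ratio / (1 - holder_ratio).

Lemma holder_ratio_bounds : 0 < holder_ratio < 1.
Proof.
  unfold holder_ratio, Rpower. split; [apply exp_pos|].
  rewrite <- exp_0. apply exp_increasing.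
  rewrite ln_Rinv by lra.
  assert (0 < ln lam) by (rewrite <- ln_1; apply ln_increasing; lra).
  nra.
Qed.

Lemma rpower_scaled_length n :
  Rpower ((d - c) / lam ^ n) alpha = Rpower (d - c) alpha * holder_ratio ^ n.
Proof.
  induction n as [|n IH]; [simpl; rewrite Rdiv_1_r; ring|].
  replace ((d - c) / lam ^ Datatypes.S n) with (((d - c) / lam ^ n) * / lam)
    by (simpl; field; split; [apply pow_nonzero|]; lra).
  rewrite <- Rpower_mult_distr.
  - rewrite IH. unfold holder_ratio. simpl. ring.
  - apply Rdiv_lt_0_compat; [lra | apply pow_lt; lra].
  - apply Rinv_0_lt_compat; lra.
Qed.

(** On an (n+1)-block, whose diameter is at most |L| / lam^(n+1), the first application of S
    distorts ratios by at most exp (M |L|^alpha q^(n+1)). *)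
Lemma branch_ratio_on_block j w : valid_word k (j :: w) ->
  ratio_distortion (word_img a b S (j :: w) (Icc c d)) S
    (exp (M * Rpower (d - c) alpha * holder_ratio ^ length (j :: w))).
Proof.
  intros Hv. set (B := word_img a b S (j :: w) (Icc c d)).
  set (n := length (j :: w)).
  pose proof (proj1 (valid_cons _ _ _ Hv)) as Hj.
  assert (HBj : subset B (Ij a b j)) by (intros x Hx; exact (proj1 Hx)).
  assert (HdS : forall z, B z -> 0 < Rabs (dS z))
    by (intros z Hz; pose proof (branch_expanding j z Hj (HBj z Hz)); lra).
  apply ratio_distortion_of_deriv with dS.
  - apply block_convex; [exact Hv | apply Icc_convex].
  - intros z Hz. apply deriv_within_subset with (Ij a b j); [exact HBj|].
    apply (proj1 (branch_C1 j Hj)), HBj, Hz.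
  - intros z z' Hz Hz'. apply le_of_ln_ratio; [apply HdS, Hz | apply HdS, Hz'|].
    destruct (Req_dec z z') as [<-|Hne].
    { rewrite Rdiv_diag by (pose proof (HdS z Hz); lra). rewrite ln_1.
      apply Rmult_le_pos; [apply Rmult_le_pos|].
      - exact M_nonneg.
      - unfold Rpower; left; apply exp_pos.
      - apply pow_le. pose proof holder_ratio_bounds; lra. }
    assert (Hdiam : Rabs (z - z') <= (d - c) / lam ^ n).
    { assert (Hln : 0 < lam ^ n) by (apply pow_lt; lra).
      apply (Rmult_le_reg_r (lam ^ n)); [exact Hln|].
      unfold Rdiv. rewrite Rmult_assoc, Rinv_l by lra.
      rewrite Rmult_1_r. apply (block_diameter (j :: w)); assumption. }
    eapply Rle_trans; [apply Rle_abs|].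
    eapply Rle_trans; [apply (holder j z z' Hj (HBj z Hz) (HBj z' Hz') Hne)|].
    rewrite Rmult_assoc, <- rpower_scaled_length.
    apply Rmult_le_compat_l; [exact M_nonneg|].
    apply Rle_Rpower_l; [lra|]. split; [apply Rabs_pos_lt; lra | exact Hdiam].
Qed.

(** Summing the per-step bounds along the word gives a geometric series. *)
Lemma block_ratio_distortion w : valid_word k w ->
  ratio_distortion (word_img a b S w (Icc c d)) (Nat.iter (length w) S)
    (exp (M * Rpower (d - c) alpha * holder_ratio * (1 - holder_ratio ^ length w)
          / (1 - holder_ratio))).
Proof.
  pose proof holder_ratio_bounds as Hq.
  induction w as [|j w IH]; intros Hv.
  - intros u v x y _ _ _ _. simpl. replace (_ / _) with 0 by (field; lra).
    rewrite exp_0. lra.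
  - pose proof (valid_cons _ _ _ Hv) as [Hj Hw].
    assert (Hcomp := ratio_distortion_comp _ _ S (Nat.iter (length w) S) _ _
      (fun x Hx => proj2 Hx)
      (fun x y Hx Hy => branch_injective j x y Hj (proj1 Hx) (proj1 Hy))
      (branch_ratio_on_block j w Hv) (IH Hw)).
    intros u v x y Du Dv Dx Dy. simpl length. rewrite !Nat.iter_succ_r.
    replace (exp _) with (exp (M * Rpower (d - c) alpha * holder_ratio ^ length (j :: w)) *
      exp (M * Rpower (d - c) alpha * holder_ratio * (1 - holder_ratio ^ length w)
           / (1 - holder_ratio)))
      by (rewrite <- exp_plus; f_equal; simpl; field; lra).
    apply Hcomp; assumption.
Qed.

Lemma block_ratio_distortion_uniform w : valid_word k w ->
  ratio_distortion (word_img a b S w (Icc c d)) (Nat.iter (length w) S)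
    (exp block_distortion_bound).
Proof.
  intros Hv. eapply ratio_distortion_weaken; [|apply block_ratio_distortion, Hv].
  pose proof holder_ratio_bounds as Hq.
  assert (0 <= M * Rpower (d - c) alpha * holder_ratio)
    by (unfold Rpower; pose proof (exp_pos (alpha * ln (d - c))); apply Rmult_le_pos; nra).
  assert (0 <= holder_ratio ^ length w) by (apply pow_le; lra).
  apply exp_monotone. unfold block_distortion_bound, Rdiv.
  apply Rmult_le_compat_r; [apply Rlt_le, Rinv_0_lt_compat; lra | nra].
Qed.

(** The arithmetic of [deep_subblock_image]: X = |x - y|, U = |u - v|, Phi = |F u - F v|,
    W = |S^m u - S^m v|, P = lam^p, with the three comparisons given by the distortion of F,
    the distortion of S^m, and the expansion of S^p. *)
Lemma chain_length_estimates X U Phi Fxy W P L es eK :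
  0 < X -> 0 < L -> 0 <= U -> 0 <= Phi -> 0 <= W -> 0 <= P -> 0 <= es -> 0 <= eK ->
  X * Phi <= es * Fxy * U -> Fxy <= L -> U * L <= eK * W * X -> W * P <= L ->
  P * Phi <= es * eK * L.
Proof.
  intros HX HL HU HPhi HW HP Hes HeK HF HFL HS HSp.
  apply (Rmult_le_reg_r (X * L)); [apply Rmult_lt_0_compat; assumption|].
  apply Rle_trans with (es * L * U * (P * L)).
  { replace (P * Phi * (X * L)) with (X * Phi * (P * L)) by ring.
    apply Rmult_le_compat_r; [apply Rmult_le_pos; lra|].
    eapply Rle_trans; [exact HF|].
    apply Rmult_le_compat_r; [lra|]. apply Rmult_le_compat_l; lra. }
  apply Rle_trans with (es * L * P * (eK * W * X)).
  { replace (es * L * U * (P * L)) with (es * L * P * (U * L)) by ring.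
    apply Rmult_le_compat_l; [apply Rmult_le_pos; [apply Rmult_le_pos|]; lra | exact HS]. }
  replace (es * L * P * (eK * W * X)) with (es * eK * L * X * (W * P)) by ring.
  replace (es * eK * L * (X * L)) with (es * eK * L * X * L) by ring.
  apply Rmult_le_compat_l; [|exact HSp].
  apply Rmult_le_pos; [apply Rmult_le_pos; [apply Rmult_le_pos|]|]; lra.
Qed.

(** Let F have derivative distortion at most s on the m-block T = phi(js)(L).  Then F maps
    each sub-block phi(js ++ is)(A) of level m+p (with A ⊆ L) onto a set of diameter at most
    e^s e^K |L| / lam^p: relative to T the sub-block has size about lam^-p (uniform
    distortion of S^m, expansion of S^p), and F preserves relative sizes up to e^s. *)
Lemma deep_subblock_image js is_ A F dF s u v :
  valid_word k js -> valid_word k is_ -> subset A (Icc c d) ->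
  C1_on (word_img a b S js (Icc c d)) F dF ->
  (forall x, word_img a b S js (Icc c d) x -> dF x <> 0) ->
  (forall x, word_img a b S js (Icc c d) x -> Icc c d (F x)) ->
  (forall x y, word_img a b S js (Icc c d) x -> word_img a b S js (Icc c d) y ->
     ln (Rabs (dF x) / Rabs (dF y)) <= s) ->
  word_img a b S (js ++ is_) A u -> word_img a b S (js ++ is_) A v ->
  lam ^ length is_ * Rabs (F u - F v) <= exp s * exp block_distortion_bound * (d - c).
Proof.
  intros Hjs His HA HF HFnz HFL HFdist Hu Hv.
  set (T := word_img a b S js (Icc c d)) in *.
  apply word_app in Hu, Hv.
  assert (HsubL : subset (word_img a b S is_ A) (Icc c d)).
  { intros y Hy. apply (block_in_L is_ y His), (word_mono _ _ _ _ A); assumption. }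
  assert (HuT : T u) by (apply (word_mono _ _ _ _ _ _ u HsubL Hu)).
  assert (HvT : T v) by (apply (word_mono _ _ _ _ _ _ v HsubL Hv)).
  assert (HFratio : ratio_distortion T F (exp s)).
  { apply ratio_distortion_of_deriv with dF;
      [apply block_convex; [exact Hjs | apply Icc_convex] | exact (proj1 HF) |].
    intros z w Hz Hw. apply le_of_ln_ratio;
      [apply Rabs_pos_lt, HFnz, Hz | apply Rabs_pos_lt, HFnz, Hw | apply HFdist; assumption]. }
  (* Points x, y of T that S^m sends to the endpoints of L. *)
  destruct (block_surj js c Hjs ltac:(unfold Icc; lra)) as [x [HxT Hx]].
  destruct (block_surj js d Hjs ltac:(unfold Icc; lra)) as [y [HyT Hy]].
  assert (Hxy : 0 < Rabs (x - y)).
  { apply Rabs_pos_lt. intro E. replace x with y in Hx by lra. lra. }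
  (* the three length comparisons: distortion of F, distortion of S^m, expansion of S^p *)
  pose proof (HFratio x y u v HxT HyT HuT HvT) as HFuv.
  pose proof (block_ratio_distortion_uniform js Hjs u v x y HuT HvT HxT HyT) as HSuv.
  rewrite Hx, Hy in HSuv.
  replace (Rabs (c - d)) with (d - c) in HSuv by (rewrite Rabs_minus_sym, Rabs_pos_eq; lra).
  pose proof (block_expands is_ A _ _ His (word_iter _ _ _ _ _ _ Hu) (word_iter _ _ _ _ _ _ Hv))
    as Hexp.
  pose proof (HA _ (word_iter _ _ _ _ _ _ (word_iter _ _ _ _ _ _ Hu))) as HSu.
  pose proof (HA _ (word_iter _ _ _ _ _ _ (word_iter _ _ _ _ _ _ Hv))) as HSv.
  pose proof (HFL x HxT) as HFx. pose proof (HFL y HyT) as HFy.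
  unfold Icc in HSu, HSv, HFx, HFy.
  assert (HFxy : Rabs (F x - F y) <= d - c) by (apply Rabs_le; split; lra).
  assert (HSm : Rabs (Nat.iter (length js) S u - Nat.iter (length js) S v) * lam ^ length is_
                <= d - c).
  { eapply Rle_trans; [exact Hexp|]. apply Rabs_le; split; lra. }
  apply (chain_length_estimates (Rabs (x - y)) (Rabs (u - v)) _ (Rabs (F x - F y))
          (Rabs (Nat.iter (length js) S u - Nat.iter (length js) S v)));
    [exact Hxy | lra | apply Rabs_pos | apply Rabs_pos | apply Rabs_pos | apply pow_le; lra
    | left; apply exp_pos | left; apply exp_pos | exact HFuv | exact HFxy | exact HSuv | exact HSm].
Qed.

End ExpandingBranches.

(** ** Expansion from small distortion *)

Lemma setting_L_nondegenerate k a b c d : setting k a b c d -> c < d.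
Proof.
  intros (Hk & Hab & _ & _ & _ & _ & _ & _ & HIL).
  pose proof (Hab 1%nat ltac:(lia)). pose proof (HIL 1%nat ltac:(lia)). lra.
Qed.

Lemma setting_branch_in_L k a b c d : setting k a b c d ->
  forall j, (1 <= j <= k)%nat -> subset (Ij a b j) (Icc c d).
Proof.
  intros (_ & _ & _ & _ & _ & _ & _ & _ & HIL) j Hj x Hx.
  pose proof (HIL j Hj). unfold Ij, Icc in *. lra.
Qed.

Lemma setting_gap_in_L k a b c d : setting k a b c d ->
  forall i, (1 <= i <= k - 1)%nat -> subset (Jgap a b i) (Icc c d).
Proof.
  intros (_ & Hab & _ & _ & _ & _ & _ & _ & HIL) i Hi x Hx.
  pose proof (HIL i ltac:(lia)). pose proof (HIL (Datatypes.S i) ltac:(lia)).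
  pose proof (Hab i ltac:(lia)). pose proof (Hab (Datatypes.S i) ltac:(lia)).
  unfold Jgap, Icc in *. lra.
Qed.

Lemma setting_first_interval_left k a b c d : setting k a b c d ->
  forall j, (2 <= j <= k)%nat -> b 1%nat <= a j.
Proof.
  intros (_ & Hab & Hgap & _).
  induction j as [|j IH]; intros Hj; [lia|].
  destruct (Nat.eq_dec j 1) as [->|Hne]; [left; apply Hgap; lia|].
  pose proof (IH ltac:(lia)). pose proof (Hab j ltac:(lia)). pose proof (Hgap j ltac:(lia)).
  lra.
Qed.

Definition width_margin (a b : nat -> R) : R := Rmin (b 1%nat - a 1%nat) (b 2%nat - a 2%nat).

(** Every I_j is disjoint from I_1 or from I_2, both contained in L; so I_j is shorter than L
    by at least the width margin. *)
Lemma branch_width_bound k a b c d : setting k a b c d ->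
  forall j, (1 <= j <= k)%nat -> b j - a j <= d - c - width_margin a b.
Proof.
  intros Hs j Hj. pose proof (setting_first_interval_left k a b c d Hs) as Hleft.
  destruct Hs as (Hk & _ & Hgap & _ & _ & _ & _ & _ & HIL).
  unfold width_margin.
  pose proof (Rmin_l (b 1%nat - a 1%nat) (b 2%nat - a 2%nat)).
  pose proof (Rmin_r (b 1%nat - a 1%nat) (b 2%nat - a 2%nat)).
  pose proof (HIL j Hj). pose proof (HIL 1%nat ltac:(lia)). pose proof (HIL 2%nat ltac:(lia)).
  destruct (Nat.eq_dec j 1) as [->|Hne].
  - pose proof (Hgap 1%nat ltac:(lia)). lra.
  - pose proof (Hleft j ltac:(lia)). lra.
Qed.

Lemma width_margin_bounds k a b c d : setting k a b c d ->
  0 < width_margin a b < d - c.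
Proof.
  intros Hs. pose proof (branch_width_bound k a b c d Hs 1%nat) as Hw1.
  destruct Hs as (Hk & Hab & _).
  pose proof (Hab 1%nat ltac:(lia)). pose proof (Hab 2%nat ltac:(lia)).
  specialize (Hw1 ltac:(lia)). unfold width_margin in *.
  split; [apply Rmin_pos|]; lra.
Qed.

Definition expansion_rate (a b : nat -> R) (c d : R) : R :=
  sqrt ((d - c) / (d - c - width_margin a b)).

Lemma expansion_rate_square k a b c d : setting k a b c d ->
  expansion_rate a b c d * expansion_rate a b c d = (d - c) / (d - c - width_margin a b).
Proof.
  intros Hs. pose proof (width_margin_bounds k a b c d Hs).
  apply sqrt_sqrt. left. apply Rdiv_lt_0_compat; lra.
Qed.

Lemma expansion_rate_gt_1 k a b c d : setting k a b c d -> 1 < expansion_rate a b c d.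
Proof.
  intros Hs. pose proof (width_margin_bounds k a b c d Hs).
  rewrite <- sqrt_1. apply sqrt_lt_1_alt. split; [lra|].
  apply (Rmult_lt_reg_r (d - c - width_margin a b)); [lra|].
  unfold Rdiv. rewrite Rmult_assoc, Rinv_l by lra. lra.
Qed.

(** A branch maps an interval of length at most |L| - delta onto L, so somewhere its
    derivative is at least |L| / (|L| - delta) = lam^2 in modulus; distortion below ln lam
    then gives |S'| >= lam everywhere. *)
Lemma uniform_expansion k a b c d alpha eps S dS : setting k a b c d ->
  in_class_S k a b c d alpha S dS -> distortion_lt k a b dS eps ->
  eps <= ln (expansion_rate a b c d) ->
  forall j x, (1 <= j <= k)%nat -> Ij a b j x -> expansion_rate a b c d <= Rabs (dS x).
Proof.
  intros Hs HS [s [Hs_eps Hdist]] Heps j x Hj Hx.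
  set (lam := expansion_rate a b c d) in *.
  assert (Hlam : 1 < lam) by apply (expansion_rate_gt_1 k a b c d Hs).
  assert (Hsq : lam * lam = (d - c) / (d - c - width_margin a b))
    by apply (expansion_rate_square k a b c d Hs).
  pose proof (width_margin_bounds k a b c d Hs).
  pose proof (setting_L_nondegenerate k a b c d Hs).
  destruct (HS j Hj) as [HC1 [_ [Honto Hgt1]]].
  destruct (proj1 (Honto c) ltac:(unfold Icc; lra)) as [u [Hu Su]].
  destruct (proj1 (Honto d) ltac:(unfold Icc; lra)) as [v [Hv Sv]].
  destruct (mvt_within_abs (Ij a b j) S dS u v (Icc_convex _ _) Hu Hv (proj1 HC1))
    as [z [Hz Ez]].
  rewrite Su, Sv, Rabs_pos_eq in Ez by lra.
  assert (Hlen : Rabs (v - u) <= d - c - width_margin a b).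
  { pose proof (branch_width_bound k a b c d Hs j Hj). unfold Ij, Icc in Hu, Hv.
    apply Rabs_le; split; lra. }
  assert (Hz_large : lam * lam <= Rabs (dS z)).
  { rewrite Hsq.
    apply (Rmult_le_reg_r (d - c - width_margin a b)); [lra|].
    replace ((d - c) / (d - c - width_margin a b) * (d - c - width_margin a b)) with (d - c)
      by (field; lra).
    apply Rle_trans with (Rabs (dS z) * Rabs (v - u)); [lra|].
    apply Rmult_le_compat_l; [apply Rabs_pos | exact Hlen]. }
  pose proof (Hgt1 x Hx). pose proof (Hgt1 z Hz).
  assert (Hz_small : Rabs (dS z) <= lam * Rabs (dS x)).
  { rewrite <- (exp_ln lam) by lra. apply le_of_ln_ratio; [lra | lra |].
    pose proof (Hdist j z x Hj Hz Hx). lra. }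
  nra.
Qed.

Lemma finite_positive_lower_bound (f : nat -> R) n :
  (forall j, (1 <= j <= n)%nat -> 0 < f j) ->
  exists g, 0 < g /\ forall j, (1 <= j <= n)%nat -> g <= f j.
Proof.
  induction n as [|n IH]; intros Hpos; [exists 1; split; [lra | intros; lia]|].
  destruct IH as [g [Hg Hgj]]; [intros j Hj; apply Hpos; lia|].
  exists (Rmin g (f (Datatypes.S n))). split; [apply Rmin_pos; [exact Hg | apply Hpos; lia]|].
  intros j Hj. destruct (Nat.eq_dec j (Datatypes.S n)) as [->|Hne]; [apply Rmin_r|].
  eapply Rle_trans; [apply Rmin_l | apply Hgj; lia].
Qed.

Lemma class_A_gap_image k a b c d M alpha eps S dS js is_ i F dF s u v :
  setting k a b c d -> 0 < M -> 0 < alpha -> in_class_A k a b c d M eps alpha S dS ->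
  eps <= ln (expansion_rate a b c d) ->
  valid_word k js -> valid_word k is_ -> (1 <= i <= k - 1)%nat ->
  C1_on (word_img a b S js (Icc c d)) F dF ->
  (forall x, word_img a b S js (Icc c d) x -> dF x <> 0) ->
  (forall x, word_img a b S js (Icc c d) x -> Icc c d (F x)) ->
  (forall x y, word_img a b S js (Icc c d) x -> word_img a b S js (Icc c d) y ->
     ln (Rabs (dF x) / Rabs (dF y)) <= s) ->
  word_img a b S (js ++ is_) (Jgap a b i) u -> word_img a b S (js ++ is_) (Jgap a b i) v ->
  expansion_rate a b c d ^ length is_ * Rabs (F u - F v) <=
    exp s * exp (block_distortion_bound c d (expansion_rate a b c d) M alpha) * (d - c).
Proof.
  intros Hset HM Halpha [HS [Hdist Hhol]] Heps Hjs His Hi.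
  apply (deep_subblock_image k a b c d _ S dS (expansion_rate_gt_1 k a b c d Hset)
    (setting_L_nondegenerate k a b c d Hset) (fun j Hj => proj1 (HS j Hj))
    (fun j Hj => proj1 (proj2 (proj2 (HS j Hj)))) (setting_branch_in_L k a b c d Hset)
    (uniform_expansion k a b c d alpha eps S dS Hset HS Hdist Heps) M alpha Halpha
    (Rlt_le _ _ HM) Hhol js is_); [exact Hjs | exact His | exact (setting_gap_in_L k a b c d Hset i Hi)].
Qed.

Lemma power_bound_from_half_gap P g gj E E' : 0 < g <= gj -> 0 <= P ->
  P * (gj / 2) <= E -> E <= E' -> P <= 2 * E' / g.
Proof.
  intros Hg HP HE HE'.
  apply (Rmult_le_reg_r (g / 2)); [lra|].
  replace (2 * E' / g * (g / 2)) with E' by (field; lra).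
  assert (P * (g / 2) <= P * (gj / 2)) by (apply Rmult_le_compat_l; lra).
  lra.
Qed.

Lemma exponent_bound lam C : 1 < lam -> exists N, forall p, lam ^ p <= C -> (p <= N)%nat.
Proof.
  intros Hlam.
  destruct (Pow_x_infinity lam ltac:(rewrite Rabs_pos_eq; lra) (C + 1)) as [N HN].
  exists N. intros p Hp. destruct (Compare_dec.le_lt_dec p N) as [Hle|Hlt]; [exact Hle|].
  exfalso. specialize (HN p ltac:(lia)).
  rewrite Rabs_pos_eq in HN by (apply pow_le; lra). lra.
Qed.

Theorem lemma3 (k : nat) (a b : nat -> R) (c d : R)
  (Hset : setting k a b c d) (M alpha : R) (HM : 0 < M) (Halpha : 0 < alpha) :
  exists (eps0 : R) (l : nat), 0 < eps0 /\
    forall (eps : R) (S dS : R -> R), eps < eps0 ->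
      in_class_A k a b c d M eps alpha S dS ->
      forall (js : list nat), valid_word k js -> (1 <= length js)%nat ->
      let T := word_img a b S js (Icc c d) in
      forall (F dF : R -> R),
        C1_on T F dF ->
        (forall x, T x -> dF x <> 0) ->
        (forall x, T x -> Icc c d (F x)) ->
        (exists s, s < 1/2 /\ forall x y, T x -> T y ->
           ln (Rabs (dF x) / Rabs (dF y)) <= s) ->
        (forall C, conn_comp (setminus T (CS k a b S)) C ->
           exists D, conn_comp (setminus (Icc c d) (CS k a b S)) D /\
             maps_onto F C D) ->
        forall (is_ : list nat) (i j : nat),
          valid_word k is_ ->
          (1 <= i <= k - 1)%nat -> (1 <= j <= k - 1)%nat ->
          subset (word_img a b S (js ++ is_) (Jgap a b i)) T ->
          maps_onto F (word_img a b S (js ++ is_) (Jgap a b i)) (Jgap a b j) ->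
          (length is_ <= l)%nat.
Proof.
  assert (Hlam : 1 < expansion_rate a b c d) by apply (expansion_rate_gt_1 k a b c d Hset).
  set (lam := expansion_rate a b c d) in *.
  (* a uniform lower bound g for the lengths of the gaps J_1, ..., J_{k-1} *)
  destruct (finite_positive_lower_bound (fun j => a (Datatypes.S j) - b j) (k - 1))
    as [g [Hg Hgj]].
  { intros j Hj. destruct Hset as (_ & _ & Hgap & _). pose proof (Hgap j ltac:(lia)). lra. }
  set (K := block_distortion_bound c d lam M alpha).
  destruct (exponent_bound lam (2 * (exp (1/2) * exp K * (d - c)) / g) Hlam) as [N HN].
  exists (ln lam), N. split; [rewrite <- ln_1; apply ln_increasing; lra|].
  intros eps S dS Heps HA js Hjs _ T F dF HF HFnz HFL [s [Hs HFdist]] _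
    is_ i j His Hi Hj _ Honto.
  apply HN.
  (* points u, v of the gap that F sends to the quarter points of J_j *)
  set (gj := a (Datatypes.S j) - b j).
  assert (Hgj' : g <= gj) by (apply (Hgj j); lia).
  destruct (proj1 (Honto (b j + gj / 4)) ltac:(unfold Jgap, gj in *; lra)) as [u [Hu Fu]].
  destruct (proj1 (Honto (b j + 3 * gj / 4)) ltac:(unfold Jgap, gj in *; lra)) as [v [Hv Fv]].
  pose proof (class_A_gap_image k a b c d M alpha eps S dS js is_ i F dF s u v Hset HM Halpha
    HA (Rlt_le _ _ Heps) Hjs His Hi HF HFnz HFL HFdist Hu Hv) as Himage.
  rewrite Fu, Fv, Rabs_minus_sym, Rabs_pos_eq in Himage by lra.
  apply (power_bound_from_half_gap _ g gj (exp s * exp K * (d - c))).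
  - split; lra.
  - apply pow_le; lra.
  - replace (gj / 2) with (b j + 3 * gj / 4 - (b j + gj / 4)) by field. exact Himage.
  - pose proof (setting_L_nondegenerate k a b c d Hset).
    pose proof (exp_pos K). pose proof (exp_monotone s (1/2) ltac:(lra)).
    apply Rmult_le_compat_r; [lra|]. apply Rmult_le_compat_r; lra.
Qed.
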